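(* Let $0<q\leq 1$, $k\geq 1$ and $t\geq k$ be real numbers. If $x\geq 1$ or $x\leq 0$, then $$(1+t)^x\leq q^x+\frac{(1+k)^x-q^x}{k^x}\,t^x .$$ *)

(* real powers via Rpower (a^x = exp (x * ln a), for a > 0). *)
From Stdlib Require Import Reals.

(* Dividing by t^x, the inequality says that ((1+t)^x - q^x) / t^x = f(1/t) is
   at most f(1/k), where f(s) = (1+s)^x - q^x s^x.  Since
   f'(s) = x ((1+s)^(x-1) - q^x s^(x-1)), and q^x <= 1 when x >= 1 while
   q^x >= 1 when x <= 0, the sign of x matches that of the bracket, so f is
   nondecreasing on (0, oo); it remains to note 1/t <= 1/k. *)
From Stdlib Require Import Reals Lra.
Open Scope R_scope.

Lemma Rpower_pos a e : 0 < Rpower a e.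
Proof. apply exp_pos. Qed.

Lemma Rpower_1_l e : Rpower 1 e = 1.
Proof. unfold Rpower; rewrite ln_1, Rmult_0_r; exact exp_0. Qed.

Lemma Rpower_Rinv_r a e : 0 < a -> Rpower a e * Rpower (/ a) e = 1.
Proof.
  intros Ha.
  rewrite Rpower_mult_distr, Rinv_r by (try apply Rinv_0_lt_compat; lra).
  apply Rpower_1_l.
Qed.

Lemma Rle_Rpower_l_nonpos a b c :
  c <= 0 -> 0 < a <= b -> Rpower b c <= Rpower a c.
Proof.
  intros Hc Hab.
  rewrite <- (Ropp_involutive c), (Rpower_Ropp a), (Rpower_Ropp b).
  apply Rinv_le_contravar; [apply Rpower_pos | apply Rle_Rpower_l; lra].
Qed.

Lemma derivable_pt_lim_Rpower_shift a e c :
  0 < a + c ->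
  derivable_pt_lim (fun y => Rpower (a + y) e) c (e * Rpower (a + c) (e - 1)).
Proof.
  intros Hac.
  rewrite <- (Rmult_1_r (e * _)).
  apply (derivable_pt_lim_comp (fun y => a + y) (fun z => Rpower z e)).
  - rewrite <- (Rplus_0_l 1).
    apply (derivable_pt_lim_plus (fct_cte a) id);
      [apply derivable_pt_lim_const | apply derivable_pt_lim_id].
  - now apply derivable_pt_lim_power.
Qed.

Lemma nondecreasing_of_derivative_nonneg (f f' : R -> R) a b :
  a <= b ->
  (forall c, a <= c <= b -> derivable_pt_lim f c (f' c)) ->
  (forall c, a < c < b -> 0 <= f' c) ->
  f a <= f b.
Proof.
  intros [Hab | ->] Hf Hf'; [| lra].
  destruct (MVT_cor2 f f' a b Hab Hf) as (c & Hfab & Hc).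
  specialize (Hf' c Hc); nra.
Qed.

Section PowerGap.

Variables q x : R.

Definition power_gap s := Rpower (1 + s) x - Rpower q x * Rpower s x.

Definition power_gap_deriv c :=
  x * (Rpower (1 + c) (x - 1) - Rpower q x * Rpower c (x - 1)).

Lemma power_gap_derivative c :
  0 < c -> derivable_pt_lim power_gap c (power_gap_deriv c).
Proof.
  intros Hc.
  replace (power_gap_deriv c) with
    (x * Rpower (1 + c) (x - 1) - Rpower q x * (x * Rpower c (x - 1)))
    by (unfold power_gap_deriv; ring).
  apply derivable_pt_lim_minus.
  - apply derivable_pt_lim_Rpower_shift; lra.
  - apply derivable_pt_lim_scal, derivable_pt_lim_power, Hc.
Qed.

Lemma Rpower_sub1_mul_power_gap a :
  0 < a -> Rpower (1 + a) x - Rpower q x = Rpower a x * power_gap (/ a).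
Proof.
  intros Ha.
  assert (Hinv : 0 < / a) by now apply Rinv_0_lt_compat.
  unfold power_gap.
  rewrite Rmult_minus_distr_l, Rpower_mult_distr by lra.
  replace (a * (1 + / a)) with (1 + a) by (field; lra).
  rewrite <- Rmult_assoc, (Rmult_comm _ (Rpower q x)), Rmult_assoc,
    Rpower_Rinv_r by exact Ha.
  ring.
Qed.

Hypotheses (hq0 : 0 < q) (hq1 : q <= 1) (hx : 1 <= x \/ x <= 0).

Lemma power_gap_deriv_nonneg c : 0 < c -> 0 <= power_gap_deriv c.
Proof.
  intros Hc; unfold power_gap_deriv.
  pose proof (Rpower_pos c (x - 1)); pose proof (Rpower_pos q x).
  destruct hx as [Hx | Hx].
  - assert (Rpower q x <= 1).
    { rewrite <- (Rpower_1_l x); apply Rle_Rpower_l; lra. }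
    assert (Rpower c (x - 1) <= Rpower (1 + c) (x - 1))
      by (apply Rle_Rpower_l; lra).
    apply Rmult_le_pos; nra.
  - assert (1 <= Rpower q x).
    { rewrite <- (Rpower_1_l x); apply Rle_Rpower_l_nonpos; lra. }
    assert (Rpower (1 + c) (x - 1) <= Rpower c (x - 1))
      by (apply Rle_Rpower_l_nonpos; lra).
    assert (Rpower (1 + c) (x - 1) - Rpower q x * Rpower c (x - 1) <= 0) by nra.
    nra.
Qed.

Lemma power_gap_nondecreasing s u :
  0 < s -> s <= u -> power_gap s <= power_gap u.
Proof.
  intros Hs Hsu.
  apply nondecreasing_of_derivative_nonneg with (f' := power_gap_deriv).
  - exact Hsu.
  - intros c Hc; apply power_gap_derivative; lra.
  - intros c Hc; apply power_gap_deriv_nonneg; lra.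
Qed.

End PowerGap.

Theorem lemma2 (q k t x : R)
  (hq0 : 0 < q) (hq1 : q <= 1) (hk : 1 <= k) (ht : k <= t)
  (hx : 1 <= x \/ x <= 0) :
  Rpower (1 + t) x <=
  Rpower q x + (Rpower (1 + k) x - Rpower q x) / Rpower k x * Rpower t x.
Proof.
  assert (Hgap : power_gap q x (/ t) <= power_gap q x (/ k)).
  { apply power_gap_nondecreasing; try assumption.
    - apply Rinv_0_lt_compat; lra.
    - apply Rinv_le_contravar; lra. }
  pose proof (Rpower_pos k x); pose proof (Rpower_pos t x).
  rewrite (Rpower_sub1_mul_power_gap q x k) by lra.
  pose proof (Rpower_sub1_mul_power_gap q x t ltac:(lra)).
  replace (Rpower k x * power_gap q x (/ k) / Rpower k x)
    with (power_gap q x (/ k)) by (field; lra).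
  nra.
Qed.
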